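(* Let $p>3$ be a prime, $q=p^h$, and $a,b\in\mathbb{F}_{q^2}^*$. Suppose that $f_{a,b}(X)=X(1+aX^{q(q-1)}+bX^{2(q-1)})$ is a permutation polynomial of $\mathbb{F}_{q^2}$, that $N_{a,b}(X)$ and $D_{a,b}(X)$ have no nonconstant common factor, and that there exist $A,B,C\in\overline{\mathbb{F}_q}$ such that $$F_{a,b}(X,Y)=-b(XY+AX+BY+C)(XY+BX+AY+C).$$ Then $b=-a^{q-1}/3$ and $3a^{q+1}(4-9a^{q+1})\in\square_q^*$.
   Context: A polynomial $f\in\mathbb{F}_{q^2}[X]$ is a permutation polynomial of $\mathbb{F}_{q^2}$ if $x\mapsto f(x)$ is a bijection of $\mathbb{F}_{q^2}$. $N_{a,b}(X)=a^qX^3+X^2+b^q$, $D_{a,b}(X)=bX^3+X+a$, and $$F_{a,b}(X,Y)=\frac{N_{a,b}(X)D_{a,b}(Y)-N_{a,b}(Y)D_{a,b}(X)}{X-Y}\in\mathbb{F}_{q^2}[X,Y].$$ $\square_q^*$ denotes the set of nonzero squares of $\mathbb{F}_q$. *)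

From HB Require Import structures.
From mathcomp Require Import all_boot all_order all_algebra all_field.
Set Implicit Arguments. Unset Strict Implicit. Unset Printing Implicit Defensive.
Import GRing.Theory.
Local Open Scope ring_scope.

Definition is_perm_poly (F : fieldType) (f : {poly F}) : Prop :=
  bijective (fun x : F => f.[x]).

Definition fab (F : fieldType) (q : nat) (a b : F) : {poly F} :=
  'X * (1 + a *: 'X^(q * (q - 1)) + b *: 'X^(2 * (q - 1))).

Definition Nab (F : fieldType) (q : nat) (a b : F) : {poly F} :=
  (a ^+ q) *: 'X^3 + 'X^2 + (b ^+ q)%:P.

Definition Dab (F : fieldType) (a b : F) : {poly F} :=
  b *: 'X^3 + 'X + a%:P.

(* Bivariate polynomials are {poly {poly K}}: the inner variable is X
   (a polynomial p(X) is embedded as p%:P), the outer variable is Y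
   (p(Y) is embedded as p^:P = map_poly polyC p). *)
Definition bivX (K : fieldType) (p : {poly K}) : {poly {poly K}} := p%:P.
Definition bivY (K : fieldType) (p : {poly K}) : {poly {poly K}} := map_poly polyC p.

(* F(X,Y) = (N(X) D(Y) - N(Y) D(X)) / (X - Y); the division is exact. *)
Definition Fbiv (K : fieldType) (N D : {poly K}) : {poly {poly K}} :=
  (bivX N * bivY D - bivY N * bivX D) %/ (bivX 'X - bivY 'X).

Definition nonzero_square_Fq (F : fieldType) (q : nat) (x : F) : Prop :=
  exists y : F, [/\ y ^+ q = y, y != 0 & y ^+ 2 = x].

From HB Require Import structures.
From mathcomp Require Import all_boot all_order all_algebra all_field.
From mathcomp Require Import ring zify.

(* The map z |-> z^(q-1) sends F_{q^2}^* onto the circle x^(q+1) = 1, and f_{a,b}(z) =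
   z h(z^(q-1)) with h = 1 + aX^q + bX^2; on the circle N = X^2 h^q and D = X h. Hence if
   f_{a,b} permutes F_{q^2} then N(x) D(y) <> N(y) D(x), i.e. F_{a,b}(x,y) <> 0, for distinct
   x, y on the circle.
   Comparing coefficients in the factorization leaves two cases. Either -B is a common root
   of N and D, against coprimality, or 3bC = -1, which forces b = -a^(q-1)/3, A + B = 3a,
   AB = 3a^2 - a^(1-q)/3 and C = a^(1-q). Then A/a and B/a are the roots of a quadratic over
   F_q, so the q-power map fixes or swaps them. If it swaps them, the Moebius map
   x |-> -(Ax + C)/(x + B) preserves the circle, and a point of the circle that it moves
   yields a zero of F_{a,b} off the diagonal. So A/a <> B/a both lie in F_q, and
   3 a^(q+1) (A - B)/a is a nonzero element of F_q whose square is 3 a^(q+1) (4 - 9 a^(q+1)). *)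

Set Implicit Arguments.
Unset Strict Implicit.
Unset Printing Implicit Defensive.

Import GRing.Theory.
Local Open Scope ring_scope.

Lemma natr_exprq (R : comNzRingType) (q n : nat) :
  [pchar R].-nat q -> (n%:R : R) ^+ q = n%:R.
Proof.
move=> qR; elim: n => [|n IHn]; first by case/andP: qR => /gtn_eqF q0 _; rewrite expr0n q0.
by rewrite -natr1 exprDn_pchar // IHn expr1n.
Qed.

Lemma natr_eq0_lt_pchar (R : nzRingType) (p n : nat) :
  p \in [pchar R] -> (n < p)%N -> (n%:R == 0 :> R) = (n == 0)%N.
Proof.
move=> pR ltnp; rewrite -(dvdn_pcharf pR); apply/idP/eqP=> [|->]; last exact: dvdn0.
by case: n ltnp => // n ltnp /(dvdn_leq (ltn0Sn n)); rewrite leqNgt ltnp.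
Qed.

Lemma natr_inj_lt_pchar (R : nzRingType) (p i j : nat) : p \in [pchar R] ->
  (i < p)%N -> (j < p)%N -> i%:R = j%:R :> R -> i = j.
Proof.
move=> pR; wlog le_ji : i j / (j <= i)%N => [hwlog|].
  by case/orP: (leq_total j i) => ? ? ? ?; [apply: hwlog | apply/esym/hwlog].
move=> lt_ip _ /eqP; rewrite -subr_eq0 -natrB // (natr_eq0_lt_pchar pR).
  by rewrite subn_eq0 => le_ij; apply/eqP; rewrite eqn_leq le_ij le_ji.
exact: leq_ltn_trans (leq_subr _ _) lt_ip.
Qed.

Lemma expr_eq1_neq0 (R : nzRingType) (n : nat) (x : R) : x ^+ n.+1 = 1 -> x != 0.
Proof.
by move=> x1; apply/eqP => x0; move: x1; rewrite x0 exprS mul0r => /eqP; rewrite eq_sym oner_eq0.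
Qed.

Lemma expr_eq1_inv (K : fieldType) (n : nat) (x : K) : x ^+ n.+1 = 1 -> x ^+ n = x^-1.
Proof.
by move=> x1; rewrite -[x ^+ n]mulr1 -(mulfV (expr_eq1_neq0 x1)) mulrA -exprSr x1 mul1r.
Qed.

Lemma exprn_sub1E (K : fieldType) (n : nat) (z t : K) :
  (0 < n)%N -> z != 0 -> z ^+ n = t * z -> z ^+ (n - 1) = t.
Proof. by move=> n_gt0 z_neq0 zn; apply: (mulIf z_neq0); rewrite -exprSr subn1 prednK. Qed.

Lemma map_Nab (F L : fieldType) (iota : {rmorphism F -> L}) (q : nat) (a b : F) :
  map_poly iota (Nab q a b) = Nab q (iota a) (iota b).
Proof. by rewrite /Nab !rmorphD /= map_polyZ !map_polyXn map_polyC /= !rmorphXn. Qed.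

Lemma map_Dab (F L : fieldType) (iota : {rmorphism F -> L}) (a b : F) :
  map_poly iota (Dab a b) = Dab (iota a) (iota b).
Proof. by rewrite /Dab !rmorphD /= map_polyZ map_polyXn map_polyC map_polyX. Qed.

Lemma pchar_nat_map (F L : fieldType) (iota : {rmorphism F -> L}) (q : nat) :
  [pchar F].-nat q -> [pchar L].-nat q.
Proof. by apply: sub_in_pnat => r _; exact: rmorph_pchar. Qed.

Lemma size_fixed_exprn (K : fieldType) (n : nat) (rs : seq K) :
  (1 < n)%N -> uniq rs -> (forall x, x \in rs -> x ^+ n = x) -> (size rs <= n)%N.
Proof.
move=> n_gt1 uniq_rs fixed.
have sizeP : size ('X^n - 'X : {poly K}) = n.+1.
  by rewrite size_addl ?size_polyXn // size_opp size_polyX ltnS.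
have P_neq0 : ('X^n - 'X : {poly K}) != 0 by rewrite -size_poly_eq0 sizeP.
rewrite -ltnS -sizeP; apply: max_poly_roots P_neq0 _ uniq_rs.
by apply/allP => x /fixed x_fixed; rewrite /root !hornerE x_fixed subrr.
Qed.

Lemma exists_nonroot (K : idomainType) (P : {poly K}) (xs : seq K) :
  P != 0 -> uniq xs -> (size P <= size xs)%N -> exists2 x, x \in xs & ~~ root P x.
Proof.
move=> P_neq0 uniq_xs size_le; have : ~~ all (root P) xs.
  by apply: contraL size_le => all_roots; rewrite -ltnNge max_poly_roots.
by case/allPn => x; exists x.
Qed.

Lemma fixed_expcard_in_image (F : finFieldType) (L : fieldType)
    (iota : {rmorphism F -> L}) (z : L) :
  z ^+ #|F| = z -> exists w, iota w = z.
Proof.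
move=> z_fixed; suff /existsP[w /eqP wz] : [exists w, iota w == z] by exists w.
apply: contraT; rewrite negb_exists => /forallP z_out.
have := @size_fixed_exprn L _ (z :: map iota (enum F)) (card_finNzRing_gt1 F).
rewrite /= size_map -cardE ltnn; apply.
  rewrite (map_inj_uniq (fmorph_inj iota)) enum_uniq andbT.
  by apply/mapP => -[w _ wz]; have := z_out w; rewrite -wz eqxx.
by move=> x; rewrite inE => /predU1P[-> //|/mapP[w _ ->]]; rewrite -rmorphXn expf_card.
Qed.

Section QuadraticFiniteField.

Variables (F : finFieldType) (q : nat).
Hypotheses (qF : [pchar F].-nat q) (cardF : #|F| = (q ^ 2)%N).

Lemma q_gt1 : (1 < q)%N.
Proof. by have := card_finNzRing_gt1 F; rewrite cardF; case: q => [|[]]. Qed.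

Lemma exprqK (z : F) : (z ^+ q) ^+ q = z.
Proof. by rewrite -exprM mulnn -cardF expf_card. Qed.

Lemma exists_exprq_neq : exists e : F, e ^+ q != e.
Proof.
apply/existsP; apply: contraT; rewrite negb_exists => /forallP fixed.
suff : (q ^ 2 <= q ^ 1)%N by rewrite leq_exp2l ?q_gt1.
rewrite expn1 -cardF cardE; apply: size_fixed_exprn q_gt1 (enum_uniq _) _ => x _.
exact/eqP/negPn/fixed.
Qed.

Lemma hilbert90 (x : F) : x ^+ q.+1 = 1 -> exists2 z : F, z != 0 & z ^+ q = x * z.
Proof.
move=> x1; have [->|x_neqN1] := eqVneq x (-1).
  have [e e_neq] := exists_exprq_neq.
  exists (e - e ^+ q); first by rewrite subr_eq0 eq_sym.
  by rewrite exprDn_pchar // exprNn_pchar // exprqK mulN1r opprB.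
exists (1 + x ^+ q).
  apply: contra x_neqN1; rewrite addrC addr_eq0 => /eqP xq.
  by rewrite -x1 exprS xq mulrN1 opprK.
by rewrite exprDn_pchar // expr1n exprqK mulrDr mulr1 -exprS x1 addrC.
Qed.

Lemma nonzero_square_Fq_image (L : fieldType) (iota : {rmorphism F -> L}) (x : F) (z : L) :
  z ^+ q = z -> z != 0 -> z ^+ 2 = iota x -> nonzero_square_Fq q x.
Proof.
move=> zq z_neq0 z2; have [y yz] : exists y, iota y = z.
  by apply: fixed_expcard_in_image; rewrite cardF expnS expn1 exprM !zq.
exists y; split; apply: (fmorph_inj iota) || rewrite -(fmorph_eq0 iota).
- by rewrite rmorphXn yz.
- by rewrite yz.
- by rewrite rmorphXn yz.
Qed.

End QuadraticFiniteField.

Section PermutationCriterion.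

Variables (F : finFieldType) (q : nat) (a b : F).
Hypotheses (qF : [pchar F].-nat q) (cardF : #|F| = (q ^ 2)%N).

Let h (t : F) := 1 + a * t ^+ q + b * t ^+ 2.

Lemma horner_fab (z : F) : (fab q a b).[z] = z * h (z ^+ (q - 1)).
Proof. by rewrite /fab !hornerE mulnC [(2 * _)%N]mulnC !exprM. Qed.

Lemma fab_scale (c z : F) : c != 0 -> c ^+ q = c -> (fab q a b).[c * z] = c * (fab q a b).[z].
Proof.
move=> c_neq0 cq; have c1 : c ^+ (q - 1) = 1.
  by apply: exprn_sub1E (ltnW (q_gt1 cardF)) c_neq0 _; rewrite mul1r.
by rewrite !horner_fab exprMn c1 mul1r mulrA.
Qed.

Lemma horner_Nab_circle (t : F) : t ^+ q.+1 = 1 -> (Nab q a b).[t] = t ^+ 2 * h t ^+ q.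
Proof.
move=> t1; unfold h; rewrite /Nab !(hornerD, hornerZ, hornerXn, hornerC).
rewrite !exprDn_pchar // expr1n !exprMn exprqK //.
transitivity (t ^+ 2 + a ^+ q * t ^+ 3 + b ^+ q * (t ^+ q * t) ^+ 2); last by ring.
by rewrite -exprSr t1; ring.
Qed.

Lemma horner_Dab_circle (t : F) : t ^+ q.+1 = 1 -> (Dab a b).[t] = t * h t.
Proof.
move=> t1; unfold h; rewrite /Dab !(hornerD, hornerZ, hornerXn, hornerX, hornerC).
transitivity (t + a * (t ^+ q * t) + b * t ^+ 3); last by ring.
by rewrite -exprSr t1; ring.
Qed.

Hypothesis fab_perm : is_perm_poly (fab q a b).

(* Write x = z1^(q-1) and y = z2^(q-1). A cross equality puts c := f(z1)/f(z2) in F_q, so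
   f(c z2) = c f(z2) = f(z1); injectivity gives z1 = c z2, hence x = y. *)
Lemma perm_fab_cross_neq (x y : F) : x ^+ q.+1 = 1 -> y ^+ q.+1 = 1 -> x != y ->
  (Nab q a b).[x] * (Dab a b).[y] != (Nab q a b).[y] * (Dab a b).[x].
Proof.
move=> x1 y1; apply: contraNneq => cross.
have q_gt0 := ltnW (q_gt1 cardF).
pose f z := (fab q a b).[z].
have f_inj : injective f by case: fab_perm => g fK _; exact: can_inj fK.
have f_neq0 z : z != 0 -> f z != 0.
  by move=> z_neq0; apply: contra_neq z_neq0 => fz0; apply: f_inj; rewrite fz0 /f horner_fab mul0r.
have [z1 z1_neq0 z1q] := hilbert90 qF cardF x1.
have [z2 z2_neq0 z2q] := hilbert90 qF cardF y1.
have f1 : f z1 = z1 * h x by rewrite /f horner_fab (exprn_sub1E q_gt0 z1_neq0 z1q).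
have f2 : f z2 = z2 * h y by rewrite /f horner_fab (exprn_sub1E q_gt0 z2_neq0 z2q).
have fq_cross : f z1 ^+ q * f z2 = f z1 * f z2 ^+ q.
  apply: (mulIf (mulf_neq0 (expr_eq1_neq0 x1) (expr_eq1_neq0 y1))).
  rewrite f1 f2 !exprMn z1q z2q.
  transitivity (z1 * z2 * ((x ^+ 2 * h x ^+ q) * (y * h y))); first by ring.
  transitivity (z1 * z2 * ((x * h x) * (y ^+ 2 * h y ^+ q))); last by ring.
  by rewrite -!horner_Nab_circle // -!horner_Dab_circle // cross; ring.
pose c := f z1 / f z2.
have c_neq0 : c != 0 by rewrite mulf_neq0 ?invr_eq0 ?f_neq0.
have cq : c ^+ q = c.
  by rewrite exprMn exprVn; apply/eqP; rewrite eqr_div ?expf_neq0 ?f_neq0 // fq_cross mulrC.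
have z1E : z1 = c * z2 by apply: f_inj; rewrite /f fab_scale // divfK ?f_neq0.
by apply/eqP/(mulIf z1_neq0); rewrite -z1q z1E exprMn cq z2q mulrCA.
Qed.

Lemma perm_fab_map_cross_neq (L : fieldType) (iota : {rmorphism F -> L}) (x y : L) :
  x ^+ q.+1 = 1 -> y ^+ q.+1 = 1 -> x != y ->
  (Nab q (iota a) (iota b)).[x] * (Dab (iota a) (iota b)).[y] !=
  (Nab q (iota a) (iota b)).[y] * (Dab (iota a) (iota b)).[x].
Proof.
have circle_image (z : L) : z ^+ q.+1 = 1 -> exists2 w, iota w = z & w ^+ q.+1 = 1.
  move=> z1; have [w wz] : exists w, iota w = z.
    apply: fixed_expcard_in_image.
    by rewrite cardF -mulnn exprM (expr_eq1_inv z1) exprVn (expr_eq1_inv z1) invrK.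
  by exists w => //; apply: (fmorph_inj iota); rewrite rmorphXn rmorph1 wz.
move=> /circle_image[x0 <- x01] /circle_image[y0 <- y01].
rewrite (inj_eq (fmorph_inj iota)) -map_Nab -map_Dab !horner_map -!rmorphM.
by rewrite (inj_eq (fmorph_inj iota)); exact: perm_fab_cross_neq.
Qed.

End PermutationCriterion.

Definition Fcubic (R : comNzRingType) (al be a b x y : R) : R :=
  al * x * y * (x + y) + (al * a - be * b) * (x ^+ 2 + x * y + y ^+ 2)
  - b * x ^+ 2 * y ^+ 2 + x * y + a * (x + y) - be.

Definition Ffactor (R : comNzRingType) (A B C x y : R) : R := x * y + A * x + B * y + C.

Lemma cross_Fcubic (L : fieldType) (al be a b x y : L) :
  (al *: 'X^3 + 'X^2 + be%:P).[x] * (Dab a b).[y] -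
  (al *: 'X^3 + 'X^2 + be%:P).[y] * (Dab a b).[x] = (x - y) * Fcubic al be a b x y.
Proof. by rewrite /Dab /Fcubic !(hornerD, hornerZ, hornerXn, hornerX, hornerC); ring. Qed.

Lemma Fbiv_cubic (L : fieldType) (al be a b : L) :
  Fbiv (al *: 'X^3 + 'X^2 + be%:P) (Dab a b) =
  Fcubic al%:P%:P be%:P%:P a%:P%:P b%:P%:P (bivX 'X) (bivY 'X).
Proof.
rewrite /Fbiv; set Q := bivX 'X - bivY 'X.
have lead_unit : lead_coef Q \is a GRing.unit.
  by rewrite /Q /bivX /bivY map_polyX -opprB lead_coefN lead_coefXsubC unitrN unitr1.
rewrite -[RHS](Pdiv.IdomainUnit.mulpK lead_unit); congr (_ %/ _).
rewrite /Q /Dab /Fcubic /bivX /bivY -!mul_polyC !rmorphD !rmorphM /= !map_polyC !map_polyX /=.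
ring.
Qed.

Lemma Fbiv_factor_eval (L : fieldType) (al be a b A B C : L) :
  Fbiv (al *: 'X^3 + 'X^2 + be%:P) (Dab a b) =
    - b%:P%:P * (bivX 'X * bivY 'X + bivX (A *: 'X) + bivY (B *: 'X) + C%:P%:P)
              * (bivX 'X * bivY 'X + bivX (B *: 'X) + bivY (A *: 'X) + C%:P%:P) ->
  forall x y, Fcubic al be a b x y = - b * Ffactor A B C x y * Ffactor B A C x y.
Proof.
rewrite Fbiv_cubic => E x y; have := congr1 (fun T => T.[y%:P].[x]) E.
by rewrite /Fcubic /Ffactor /bivX /bivY !map_polyZ !map_polyX !hornerE.
Qed.

Lemma Fcubic_factor_coefs (L : fieldType) (al be a b A B C : L) : (2%:R : L) != 0 ->
  (forall x y, Fcubic al be a b x y = - b * Ffactor A B C x y * Ffactor B A C x y) ->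
  [/\ al = - b * (A + B), al * a - be * b = - b * (A * B),
      1 = - 2%:R * b * C - b * (A + B) ^+ 2 + 3%:R * b * (A * B),
      a = - b * (A + B) * C & be = b * C ^+ 2].
Proof.
move=> two_neq0 factorE.
pose d x y := Fcubic al be a b x y + b * Ffactor A B C x y * Ffactor B A C x y.
have d0 x y : d x y = 0 by rewrite /d factorE mulNr mulNr addNr.
have double_eq (l r : L) : 2%:R * (l - r) = 0 -> l = r.
  by move/eqP; rewrite mulf_eq0 (negbTE two_neq0) subr_eq0 => /eqP.
(* Each coefficient of d is a combination of its values on {-1,0,1}^2. *)
split; apply: double_eq.
- transitivity (d 1 1 + d 1 (-1) - 3%:R * d 1 0 - d (-1) 0 + 2%:R * d 0 0).
    by rewrite /d /Fcubic /Ffactor; ring.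
  by rewrite !d0; ring.
- transitivity (d 1 0 + d (-1) 0 - 2%:R * d 0 0); first by rewrite /d /Fcubic /Ffactor; ring.
  by rewrite !d0; ring.
- transitivity (d 1 0 + d (-1) 0 - 2%:R * d 1 (-1)); first by rewrite /d /Fcubic /Ffactor; ring.
  by rewrite !d0; ring.
- transitivity (d 1 0 - d (-1) 0); first by rewrite /d /Fcubic /Ffactor; ring.
  by rewrite !d0; ring.
- transitivity (- 2%:R * d 0 0); first by rewrite /d /Fcubic /Ffactor; ring.
  by rewrite !d0; ring.
Qed.

Section FactorCoefficients.

Variables (L : fieldType) (al be a b A B C : L).
Hypotheses (E1 : al = - b * (A + B)) (E2 : al * a - be * b = - b * (A * B))
  (E3 : 1 = - 2%:R * b * C - b * (A + B) ^+ 2 + 3%:R * b * (A * B))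
  (E4 : a = - b * (A + B) * C) (E5 : be = b * C ^+ 2).

Lemma factor_rel : b * (b * (A + B) ^+ 2 * C - b * C ^+ 2 + A * B) = 0.
Proof.
transitivity (al * a - be * b + b * (A * B)); first by rewrite E1 E4 E5; ring.
by rewrite E2; ring.
Qed.

Lemma factor_cases : 3%:R * (b * C) + 1 = 0 \/ b * (A + B) ^+ 2 - b * C + 1 = 0.
Proof.
have : (3%:R * (b * C) + 1) * (b * (A + B) ^+ 2 - b * C + 1) = 0.
  transitivity (3%:R * (b * (b * (A + B) ^+ 2 * C - b * C ^+ 2 + A * B)) +
    (1 - (- 2%:R * b * C - b * (A + B) ^+ 2 + 3%:R * b * (A * B)))); first by ring.
  by rewrite factor_rel -E3 mulr0 subrr addr0.
by move/eqP; rewrite mulf_eq0 => /orP[] /eqP; [left | right].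
Qed.

(* In the second case -B is a common root of N and D. *)
Lemma factor_case2_not_coprime : b != 0 -> b * (A + B) ^+ 2 - b * C + 1 = 0 ->
  ~~ coprimep (al *: 'X^3 + 'X^2 + be%:P) (Dab a b).
Proof.
move=> b_neq0 case2.
have ABC : A * B = C.
  have /eqP := factor_rel; rewrite mulf_eq0 (negbTE b_neq0) /= => /eqP rel.
  transitivity ((b * (A + B) ^+ 2 * C - b * C ^+ 2 + A * B) -
    C * (b * (A + B) ^+ 2 - b * C + 1) + C); first by ring.
  by rewrite rel case2; ring.
have E3' : 1 + b * (A ^+ 2 + A * B + B ^+ 2) = 0.
  by move: E3; rewrite -ABC => E3AB; rewrite {1}E3AB; ring.
have rootN : root (al *: 'X^3 + 'X^2 + be%:P) (- B).
  apply/eqP; rewrite !(hornerD, hornerZ, hornerXn, hornerC) E1 E5 -ABC.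
  by transitivity (B ^+ 2 * (1 + b * (A ^+ 2 + A * B + B ^+ 2))); [ring | rewrite E3' mulr0].
have rootD : (Dab a b).[- B] = 0.
  rewrite /Dab !(hornerD, hornerZ, hornerXn, hornerX, hornerC) E4 -ABC.
  by transitivity (- B * (1 + b * (A ^+ 2 + A * B + B ^+ 2))); [ring | rewrite E3' mulr0].
by apply/negP => /coprimep_root/(_ rootN); rewrite rootD eqxx.
Qed.

Lemma factor_case1_values : (3%:R : L) != 0 -> a != 0 -> al != 0 -> 3%:R * (b * C) + 1 = 0 ->
  [/\ b = - al / (3%:R * a), A + B = 3%:R * a,
      A * B = 3%:R * a ^+ 2 - a / (3%:R * al) & C = a / al].
Proof.
move=> three_neq0 a_neq0 al_neq0 case1.
have a_alC : a = al * C by rewrite E4 E1; ring.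
have CE : C = a / al by rewrite a_alC mulrAC mulfV // mul1r.
have b3a : b * (3%:R * a) = - al.
  rewrite a_alC; transitivity (al * (3%:R * (b * C) + 1) - al); first by ring.
  by rewrite case1; ring.
have bE : b = - al / (3%:R * a) by rewrite -b3a mulfK // mulf_neq0.
have b_neq0 : b != 0.
  by apply: contraNneq al_neq0 => b0; rewrite -oppr_eq0 -b3a b0 mul0r.
split => //; first by apply: (mulfI b_neq0); rewrite b3a E1; ring.
have -> : A * B = 3%:R * a / al * (- b * (A * B)).
  by rewrite bE; field; rewrite a_neq0 al_neq0 three_neq0.
by rewrite -E2 E5 bE CE; field; rewrite a_neq0 al_neq0 three_neq0.
Qed.

End FactorCoefficients.

Section ConjugateRatios.

Variables (L : fieldType) (q : nat) (a A B : L).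
Hypotheses (qL : [pchar L].-nat q) (a_neq0 : a != 0) (aqK : (a ^+ q) ^+ q = a)
  (three_neq0 : (3%:R : L) != 0).
Hypotheses (sumAB : A + B = 3%:R * a)
  (prodAB : A * B = 3%:R * a ^+ 2 - a / (3%:R * a ^+ q)).

Lemma ratioB : B / a = 3%:R - A / a.
Proof. by rewrite -(addKr A B) sumAB; field. Qed.

(* A/a and B/a are the two roots of X^2 - 3X + k, where k is fixed by the q-power map. *)
Lemma ratio_exprq_cases : (A / a) ^+ q = A / a \/ (A / a) ^+ q = B / a.
Proof.
have aq_neq0 : a ^+ q != 0 by rewrite expf_neq0.
have q_gt0 : (0 < q)%N by case/andP: qL.
pose k := 3%:R - (3%:R * (a ^+ q * a))^-1.
have rk : A / a * (B / a) = k.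
  transitivity (A * B / a ^+ 2); first by field.
  by rewrite prodAB /k; field; rewrite a_neq0 aq_neq0 three_neq0.
have kq : k ^+ q = k.
  by rewrite exprDn_pchar // exprNn_pchar // exprVn !exprMn natr_exprq // aqK [a * _]mulrC.
have gq z : (z ^+ 2 - 3%:R * z + k) ^+ q = (z ^+ q) ^+ 2 - 3%:R * z ^+ q + k.
  rewrite exprDn_pchar // kq exprDn_pchar // exprNn_pchar // (exprMn _ 3%:R).
  by rewrite natr_exprq // -!exprM mulnC.
have : ((A / a) ^+ q - A / a) * ((A / a) ^+ q - B / a) = 0.
  transitivity (((A / a) ^+ 2 - 3%:R * (A / a) + k) ^+ q).
    by rewrite gq -rk ratioB; ring.
  have -> : (A / a) ^+ 2 - 3%:R * (A / a) + k = 0 by rewrite -rk ratioB; ring.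
  by rewrite expr0n (gtn_eqF q_gt0).
by move/eqP; rewrite mulf_eq0 !subr_eq0 => /orP[] /eqP; [left | right].
Qed.

Lemma swapped_conjugates : (A / a) ^+ q = B / a ->
  [/\ A ^+ q = B / (a / a ^+ q), B ^+ q = A / (a / a ^+ q)
     & (a / a ^+ q) ^+ q = (a / a ^+ q)^-1].
Proof.
move=> swap; have aq_neq0 : a ^+ q != 0 by rewrite expf_neq0.
have AqE : A ^+ q = B / (a / a ^+ q).
  by rewrite -(divfK a_neq0 A) exprMn swap; field; rewrite a_neq0 aq_neq0.
split => //; last by rewrite exprMn exprVn aqK invf_div.
have [AE BE] : A = 3%:R * a - B /\ B = 3%:R * a - A by split; rewrite -sumAB; ring.
rewrite {1}BE exprDn_pchar // exprNn_pchar // (exprMn _ 3%:R) natr_exprq // AqE.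
by rewrite [in RHS]AE; field; rewrite a_neq0 aq_neq0.
Qed.

Lemma discriminant_square : (A / a) ^+ q = A / a -> A != B ->
  exists z : L, [/\ z ^+ q = z, z != 0
                 & z ^+ 2 = 3%:R * a ^+ q.+1 * (4%:R - 9%:R * a ^+ q.+1)].
Proof.
move=> Afixed A_neq_B; have aq_neq0 : a ^+ q != 0 by rewrite expf_neq0.
have Bfixed : (B / a) ^+ q = B / a.
  by rewrite ratioB exprDn_pchar // exprNn_pchar // natr_exprq // Afixed.
have uq : (a ^+ q.+1) ^+ q = a ^+ q.+1 by rewrite exprS exprMn aqK mulrC.
exists (3%:R * a ^+ q.+1 * (A / a - B / a)); split.
- by rewrite !exprMn natr_exprq // uq exprDn_pchar // exprNn_pchar // Afixed Bfixed.
- by rewrite -mulrBl !mulf_neq0 ?expf_neq0 ?invr_eq0 ?subr_eq0.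
- transitivity (9%:R * a ^+ q.+1 ^+ 2 * ((A + B) ^+ 2 - 4%:R * (A * B)) / a ^+ 2).
    by field.
  by rewrite sumAB prodAB !(exprS a q); field; rewrite a_neq0 aq_neq0 three_neq0.
Qed.

End ConjugateRatios.

Section CirclePoints.

Variables (L : fieldType) (p q : nat) (e : L).
Hypotheses (pL : p \in [pchar L]) (qL : [pchar L].-nat q)
  (eqK : (e ^+ q) ^+ q = e) (eq_neq : e ^+ q != e).

(* The points (i + e^q) / (i + e), for i < p. *)
Lemma circle_points n : (n <= p)%N ->
  exists xs : seq L, [/\ uniq xs, size xs = n & forall x, x \in xs -> x ^+ q.+1 = 1].
Proof.
move=> le_np.
have den_neq0 i : i%:R + e != 0.
  apply: contra eq_neq; rewrite addrC addr_eq0 => /eqP ->.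
  by rewrite exprNn_pchar // natr_exprq.
have num_neq0 i : i%:R + e ^+ q != 0.
  by rewrite -(natr_exprq i qL) -exprDn_pchar // expf_neq0.
pose f i := (i%:R + e ^+ q) / (i%:R + e).
exists (map f (iota 0 n)); split; last 2 first.
- by rewrite size_map size_iota.
- move=> _ /mapP[i _ ->]; rewrite exprS exprMn exprVn !exprDn_pchar // natr_exprq // eqK.
  by rewrite /f; field; rewrite den_neq0 num_neq0.
rewrite map_inj_in_uniq ?iota_uniq // => i j; rewrite !mem_iota !add0n => lt_in lt_jn fij.
apply: natr_inj_lt_pchar pL (leq_trans lt_in le_np) (leq_trans lt_jn le_np) _.
have /eqP : (i%:R - j%:R) * (e - e ^+ q) = 0 :> L.
  move: fij; rewrite /f => /eqP; rewrite eqr_div ?den_neq0 // => /eqP fij.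
  by transitivity ((i%:R + e ^+ q) * (j%:R + e) - (j%:R + e ^+ q) * (i%:R + e));
    [ring | rewrite fij subrr].
by rewrite mulf_eq0 !subr_eq0 [e == _]eq_sym (negbTE eq_neq) orbF => /eqP.
Qed.

End CirclePoints.

Section MoebiusSwap.

Variables (L : fieldType) (q : nat) (A B C : L).
Hypotheses (qL : [pchar L].-nat q) (C_neq0 : C != 0)
  (AqE : A ^+ q = B / C) (BqE : B ^+ q = A / C) (CqE : C ^+ q = C^-1).

Lemma moebius_circle (x : L) : x ^+ q.+1 = 1 -> x + B != 0 -> A * x + C != 0 ->
  (- (A * x + C) / (x + B)) ^+ q.+1 = 1.
Proof.
move=> x1 xB_neq0 AxC_neq0; have x_neq0 := expr_eq1_neq0 x1.
rewrite exprS exprMn exprVn exprNn_pchar // !exprDn_pchar // !exprMn AqE BqE CqE.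
by rewrite (expr_eq1_inv x1); field; rewrite xB_neq0 C_neq0 x_neq0 addrC AxC_neq0.
Qed.

Variables (N D : {poly L}) (c : L).
Hypothesis crossE : forall x y,
  N.[x] * D.[y] - N.[y] * D.[x] = (x - y) * (c * Ffactor A B C x y * Ffactor B A C x y).

(* x |-> -(A x + C) / (x + B) preserves the circle and kills the first factor; a point
   avoiding its poles and (at most two) fixed points gives the pair. *)
Lemma swapped_factor_cross_eq (xs : seq L) :
  uniq xs -> size xs = 5%N -> (forall x, x \in xs -> x ^+ q.+1 = 1) ->
  exists x y, [/\ x ^+ q.+1 = 1, y ^+ q.+1 = 1, x != y & N.[x] * D.[y] = N.[y] * D.[x]].
Proof.
move=> uniq_xs size_xs circle_xs.
pose p2 := A *: 'X + C%:P; pose p3 := 'X^2 + ((A + B) *: 'X + C%:P).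
have nonzero_at0 (r : {poly L}) : r.[0] = C -> r != 0.
  by move=> r0; apply: contra_neq C_neq0 => r_eq0; rewrite -r0 r_eq0 horner0.
have p2_neq0 : p2 != 0 by apply: nonzero_at0; rewrite hornerD hornerZ hornerX hornerC mulr0 add0r.
have p3_neq0 : p3 != 0.
  apply: nonzero_at0; rewrite !(hornerD, hornerZ, hornerXn, hornerX, hornerC).
  by rewrite expr0n mulr0 !add0r.
have size_p2 : (size p2 <= 2)%N.
  rewrite (leq_trans (size_polyD _ _)) // geq_max (leq_trans (size_polyC_leq1 _)) //.
  by rewrite (leq_trans (size_scale_leq _ _)) ?size_polyX.
have size_p3 : size p3 = 3%N.
  rewrite size_addl size_polyXn // (leq_ltn_trans (size_polyD _ _)) // gtn_max.
  by rewrite (leq_ltn_trans (size_scale_leq _ _)) ?size_polyX ?(leq_ltn_trans (size_polyC_leq1 _)).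
have p1_neq0 : 'X + B%:P != 0 by rewrite -size_poly_eq0 size_XaddC.
pose P := ('X + B%:P) * p2 * p3.
have P_neq0 : P != 0 by rewrite !mulf_neq0.
have size_P : (size P <= size xs)%N.
  rewrite size_xs !size_mul ?mulf_neq0 // size_XaddC size_p3.
  by case: (size p2) size_p2 => [|[|[|]]].
have [x /circle_xs x1] := exists_nonroot P_neq0 uniq_xs size_P.
rewrite /root !(hornerM, hornerD, hornerZ, hornerXn, hornerX, hornerC) !mulf_eq0 !negb_or.
case/andP => /andP[xB_neq0 AxC_neq0] x_notfixed.
set y := - (A * x + C) / (x + B).
exists x, y; split; first by [].
- exact: moebius_circle.
- apply: contra x_notfixed => /eqP xy; apply/eqP.
  transitivity (x * (x + B) + (A * x + C)); first by ring.
  by rewrite {1}xy /y divfK // addNr.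
- apply/eqP; rewrite -subr_eq0 crossE.
  suff -> : Ffactor A B C x y = 0 by rewrite !(mulr0, mul0r).
  transitivity (y * (x + B) + (A * x + C)); first by rewrite /Ffactor; ring.
  by rewrite /y divfK // addNr.
Qed.

End MoebiusSwap.

Lemma perm_fab_no_swapped_factor (F : finFieldType) (L : fieldType) (iota : {rmorphism F -> L})
    (p q : nat) (a b : F) (c A B C : L) :
  p \in [pchar F] -> (4 < p)%N -> [pchar F].-nat q -> #|F| = (q ^ 2)%N ->
  is_perm_poly (fab q a b) ->
  C != 0 -> A ^+ q = B / C -> B ^+ q = A / C -> C ^+ q = C^-1 ->
  (forall x y, (Nab q (iota a) (iota b)).[x] * (Dab (iota a) (iota b)).[y] -
               (Nab q (iota a) (iota b)).[y] * (Dab (iota a) (iota b)).[x] =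
               (x - y) * (c * Ffactor A B C x y * Ffactor B A C x y)) ->
  False.
Proof.
move=> pF p_gt4 qF cardF fab_perm C_neq0 AqE BqE CqE crossE.
have pL := rmorph_pchar iota pF.
have qL := pchar_nat_map iota qF.
have [e e_neq] := exists_exprq_neq cardF.
have [xs [uniq_xs size_xs circle_xs]] : exists xs : seq L,
    [/\ uniq xs, size xs = 5%N & forall x, x \in xs -> x ^+ q.+1 = 1].
  apply: (circle_points (e := iota e) pL qL _ _ p_gt4); first by rewrite -!rmorphXn exprqK.
  by rewrite -rmorphXn (inj_eq (fmorph_inj iota)).
have [x [y [x1 y1 x_neq_y cross_eq]]] :=
  swapped_factor_cross_eq qL C_neq0 AqE BqE CqE crossE uniq_xs size_xs circle_xs.
by have := perm_fab_map_cross_neq qF cardF fab_perm iota x1 y1 x_neq_y; rewrite cross_eq eqxx.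
Qed.

Lemma perm_fab_case1_ratio (F : finFieldType) (L : fieldType) (iota : {rmorphism F -> L})
    (p q : nat) (a b : F) (A B C : L) :
  p \in [pchar F] -> (4 < p)%N -> [pchar F].-nat q -> #|F| = (q ^ 2)%N ->
  is_perm_poly (fab q a b) -> a != 0 -> (3%:R : L) != 0 ->
  A + B = 3%:R * iota a -> A * B = 3%:R * iota a ^+ 2 - iota a / (3%:R * iota a ^+ q) ->
  C = iota a / iota a ^+ q ->
  (forall x y, Fcubic (iota a ^+ q) (iota b ^+ q) (iota a) (iota b) x y =
               - iota b * Ffactor A B C x y * Ffactor B A C x y) ->
  (A / iota a) ^+ q = A / iota a /\ A != B.
Proof.
move=> pF p_gt4 qF cardF fab_perm a_neq0 three_neq0 sumAB prodAB CE factorE.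
have qL := pchar_nat_map iota qF.
have a'_neq0 : iota a != 0 by rewrite fmorph_eq0.
have aqK : (iota a ^+ q) ^+ q = iota a by rewrite -!rmorphXn exprqK.
have not_swap : (A / iota a) ^+ q != B / iota a.
  apply/negP => /eqP swap.
  have [] := swapped_conjugates qL a'_neq0 aqK sumAB swap; rewrite -CE => AqE BqE CqE.
  apply: (perm_fab_no_swapped_factor (iota := iota) (c := - iota b) pF p_gt4 qF cardF fab_perm
    _ AqE BqE CqE); first by rewrite CE mulf_neq0 ?invr_eq0 ?expf_neq0.
  by move=> x y; rewrite cross_Fcubic factorE.
have [Afixed | swap] := ratio_exprq_cases qL a'_neq0 aqK three_neq0 sumAB prodAB; last first.
  by rewrite swap eqxx in not_swap.
by split => //; apply: contraNneq not_swap => AB; rewrite Afixed AB.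
Qed.

Theorem mainTheorem10
  (F : finFieldType) (p h q : nat) (hp : prime p) (hp3 : (3 < p)%N)
  (hq : q = (p ^ h)%N) (hchar : p \in [pchar F]) (hcard : #|F| = (q ^ 2)%N)
  (a b : F) (ha : a != 0) (hb : b != 0)
  (hperm : is_perm_poly (fab q a b))
  (hcop : coprimep (Nab q a b) (Dab a b))
  (L : closedFieldType) (iota : {rmorphism F -> L})
  (hfact : exists A B C : L,
     Fbiv (map_poly iota (Nab q a b)) (map_poly iota (Dab a b)) =
     - (iota b)%:P%:P *
       (bivX 'X * bivY 'X + bivX (A *: 'X) + bivY (B *: 'X) + C%:P%:P) *
       (bivX 'X * bivY 'X + bivX (B *: 'X) + bivY (A *: 'X) + C%:P%:P)) :
  b = - a ^+ (q - 1) / 3%:R /\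
  nonzero_square_Fq q (3%:R * a ^+ (q + 1) * (4%:R - 9%:R * a ^+ (q + 1))).
Proof.
have qF : [pchar F].-nat q by rewrite hq pnatX (pnatE _ hp) hchar.
have pL := rmorph_pchar iota hchar.
have qL := pchar_nat_map iota qF.
have p_gt4 : (4 < p)%N by rewrite ltn_neqAle hp3 andbT; apply: contraTneq hp => <-.
have [two_neq0 three_neq0] : (2%:R : L) != 0 /\ (3%:R : L) != 0.
  by split; rewrite (natr_eq0_lt_pchar pL) //; lia.
have [a_neq0 b_neq0] : iota a != 0 /\ iota b != 0 by rewrite !fmorph_eq0.
case: hfact => A [B [C]]; rewrite map_Nab map_Dab => /Fbiv_factor_eval factorE.
have [E1 E2 E3 E4 E5] := Fcubic_factor_coefs two_neq0 factorE.
have [case1 | case2] := factor_cases E1 E2 E3 E4 E5; last first.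
  move/negP: (factor_case2_not_coprime E1 E2 E3 E4 E5 b_neq0 case2); case.
  by rewrite -(coprimep_map iota) map_Nab map_Dab in hcop.
have [bE sumAB prodAB CE] :=
  factor_case1_values E1 E2 E4 E5 three_neq0 a_neq0 (expf_neq0 q a_neq0) case1.
split.
  apply: (fmorph_inj iota); rewrite fmorph_div rmorphN rmorphXn rmorph_nat bE.
  rewrite -[in LHS](subnK (ltnW (q_gt1 hcard))) addn1 exprSr.
  by field; rewrite a_neq0 three_neq0.
have [Afixed A_neq_B] :=
  perm_fab_case1_ratio hchar p_gt4 qF hcard hperm ha three_neq0 sumAB prodAB CE factorE.
have aqK : (iota a ^+ q) ^+ q = iota a by rewrite -!rmorphXn exprqK.
have [z [zq z_neq0 z2]] :=
  discriminant_square qL a_neq0 aqK three_neq0 sumAB prodAB Afixed A_neq_B.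
apply: (nonzero_square_Fq_image (iota := iota) hcard zq z_neq0).
by rewrite z2 addn1 !(rmorphM, rmorphB, rmorph_nat, rmorphXn).
Qed.
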